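(* If $\mathrm{char}(\Bbbk)=0$ or $\mathrm{char}(\Bbbk)=p\ge5$, then $P$ is minimally generated by $f_1=3y^3-4xyz+x^4-3y^3z^5-2xy^6z^2-x^2y^4z^3$, $f_2=2y^2z-3xz^2+x^3y-2y^7z^2-xy^5z^3$, $f_3=yz^2-3x^2y^2+2x^3z-y^6z^3-2xy^4z^4$, $f_4=z^3-2xy^3+x^2yz-y^5z^4$; in particular $\mu(P)=4$.
   Context: $\Bbbk$ is a field. $\rho:\Bbbk[[x,y,z]]\to\Bbbk[[t]]$ is the $\Bbbk$-algebra morphism with $\rho(x)=t^6+t^{31}$, $\rho(y)=t^8$, $\rho(z)=t^{10}$, and $P=\ker\rho$ (the first prime of Moh, $n=3$, $\lambda=25$). $\mu(P)$ is the minimal number of generators of $P$. *)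

From HB Require Import structures.
From mathcomp Require Import all_boot all_order all_algebra.
Set Implicit Arguments. Unset Strict Implicit. Unset Printing Implicit Defensive.
Import Order.TTheory GRing.Theory Num.Theory.
Local Open Scope ring_scope.

(* Formal power series in three variables x,y,z over K, given by their
   coefficient function: F a b c = coefficient of x^a y^b z^c. *)
Definition ps3 (K : fieldType) := nat -> nat -> nat -> K.

Section PS3.
Variable K : fieldType.

Definition ps3_add (F G : ps3 K) : ps3 K := fun a b c => F a b c + G a b c.
Definition ps3_zero : ps3 K := fun _ _ _ => 0.

Definition ps3_mul (F G : ps3 K) : ps3 K := fun a b c =>
  \sum_(i < a.+1) \sum_(j < b.+1) \sum_(l < c.+1)
     F i j l * G (a - i)%N (b - j)%N (c - l)%N.

Definition ps3_mono (r : K) (a b c : nat) : ps3 K := fun i j l =>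
  if [&& i == a, j == b & l == c] then r else 0.

Definition ps3_ideal (n : nat) (g : 'I_n -> ps3 K) : ps3 K -> Prop :=
  fun F => exists h : 'I_n -> ps3 K,
    F = fun a b c => \sum_(i < n) ps3_mul (h i) (g i) a b c.

(* rho : K[[x,y,z]] -> K[[t]],  x |-> t^6 + t^31, y |-> t^8, z |-> t^10.
   rho F n is the coefficient of t^n in rho(F); only monomials
   x^a y^b z^c with a,b,c <= n can contribute to it. *)
Definition rho (F : ps3 K) (n : nat) : K :=
  \sum_(a < n.+1) \sum_(b < n.+1) \sum_(c < n.+1)
     F a b c * (('X^6 + 'X^31) ^+ a * 'X^(8 * b + 10 * c) : {poly K})`_n.

Definition P_Moh : ps3 K -> Prop := fun F => forall n, rho F n = 0.

Definition sum_ps3 (s : seq (ps3 K)) : ps3 K := foldr ps3_add ps3_zero s.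

Definition f1 : ps3 K := sum_ps3
  [:: ps3_mono 3 0 3 0; ps3_mono (-4) 1 1 1; ps3_mono 1 4 0 0;
      ps3_mono (-3) 0 3 5; ps3_mono (-2) 1 6 2; ps3_mono (-1) 2 4 3].
Definition f2 : ps3 K := sum_ps3
  [:: ps3_mono 2 0 2 1; ps3_mono (-3) 1 0 2; ps3_mono 1 3 1 0;
      ps3_mono (-2) 0 7 2; ps3_mono (-1) 1 5 3].
Definition f3 : ps3 K := sum_ps3
  [:: ps3_mono 1 0 1 2; ps3_mono (-3) 2 2 0; ps3_mono 2 3 0 1;
      ps3_mono (-1) 0 6 3; ps3_mono (-2) 1 4 4].
Definition f4 : ps3 K := sum_ps3
  [:: ps3_mono 1 0 0 3; ps3_mono (-2) 1 3 0; ps3_mono 1 2 1 1;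
      ps3_mono (-1) 0 5 4].

Definition fgens (i : 'I_4) : ps3 K :=
  match val i with 0 => f1 | 1 => f2 | 2 => f3 | _ => f4 end.

End PS3.

(* rho is multiplicative, with rho(x), rho(y), rho(z) of t-adic orders 6, 8, 10, and
   it kills f_1, ..., f_4.  Conversely, at x = 0 the f_i become units times the cubic
   monomials y^3, y^2 z, y z^2, z^3 of K[[y,z]] (the units 3(1 - z^5), 2(1 - y^5 z),
   1 - y^5 z, 1 - y^5 z need 2 and 3 invertible).  So every series is congruent
   modulo x to a combination of the f_i plus a K-combination of
   b = 1, y, z, y^2 - xz, yz - x^3, z^2 - x^2 y, and iterating x-adically writes any
   F as sum h_i f_i + sum r_j(x) b_j.  The images rho(b_j) have t-adic orders
   0, 8, 10, 41, 43, 45, pairwise distinct modulo 6, so rho(F) = 0 forces every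
   r_j = 0: P = (f_1, ..., f_4).  For minimality, all of P has order >= 3 while the
   cubic parts of the f_i are independent; the degree-3 coefficient matrix of the
   f_i, which is invertible, then factors through K^n for any generating family of
   size n, so n >= 4. *)

From HB Require Import structures.
From mathcomp Require Import all_boot all_order all_algebra.
From mathcomp Require Import boolp ring zify.
Set Implicit Arguments. Unset Strict Implicit. Unset Printing Implicit Defensive.
Import GRing.Theory.
Local Open Scope ring_scope.

Section OrdinalSums.
Variable V : nmodType.

Lemma sum_ord_eq_if n i (f : nat -> V) :
  \sum_(j < n) (if j == i :> nat then f j else 0) = if (i < n)%N then f i else 0.
Proof. by rewrite -big_mkcond big_ord1_eq. Qed.

Lemma sum_ord3_pick n (f : nat -> nat -> nat -> V) a b c :
  \sum_(i < n) \sum_(j < n) \sum_(l < n)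
    (if [&& i == a :> nat, j == b :> nat & l == c :> nat] then f i j l else 0) =
  if [&& a < n, b < n & c < n]%N then f a b c else 0.
Proof.
transitivity (\sum_(i < n) if i == a :> nat then
  \sum_(j < n) (if j == b :> nat then
    \sum_(l < n) (if l == c :> nat then f i j l else 0) else 0) else 0).
  apply: eq_bigr => i _; case: eqP => _ /=; last by rewrite big1 // => j _; rewrite big1.
  by apply: eq_bigr => j _; case: eqP => _ //=; rewrite big1.
rewrite (sum_ord_eq_if _ _ (fun i => \sum_(j < n) (if j == b :> nat then
    \sum_(l < n) (if l == c :> nat then f i j l else 0) else 0))).
case: ltnP => //= _.
rewrite (sum_ord_eq_if _ _ (fun j => \sum_(l < n) (if l == c :> nat then f a j l else 0))).
by case: ltnP => //= _; rewrite (sum_ord_eq_if _ _ (f a b)).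
Qed.

End OrdinalSums.

Section PowerSeriesRing.
Variable K : fieldType.
Local Notation ps := (ps3 K).

HB.instance Definition _ := gen_eqMixin ps.
HB.instance Definition _ := gen_choiceMixin ps.

Lemma ps3_ext (F G : ps) : (forall a b c, F a b c = G a b c) -> F = G.
Proof.
move=> FG; do 3!apply: functional_extensionality_dep => ?; exact: FG.
Qed.

Definition ps3_opp (F : ps) : ps := fun a b c => - F a b c.

Lemma ps3_addA : associative (@ps3_add K).
Proof. by move=> F G H; apply: ps3_ext => a b c; apply: addrA. Qed.
Lemma ps3_addC : commutative (@ps3_add K).
Proof. by move=> F G; apply: ps3_ext => a b c; apply: addrC. Qed.
Lemma ps3_add0 : left_id (@ps3_zero K) (@ps3_add K).
Proof. by move=> F; apply: ps3_ext => a b c; apply: add0r. Qed.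
Lemma ps3_addN : left_inverse (@ps3_zero K) ps3_opp (@ps3_add K).
Proof. by move=> F; apply: ps3_ext => a b c; apply: addNr. Qed.

HB.instance Definition _ :=
  GRing.isZmodule.Build ps ps3_addA ps3_addC ps3_add0 ps3_addN.

(* The ring axioms are transported from [{poly {poly {poly K}}}]: a product
   coefficient of index (a, b, c) only involves coefficients in the cube of
   side a + b + c + 1, on which a series agrees with a polynomial. *)
Local Notation poly3 := {poly {poly {poly K}}}.

Definition ps3_of_poly (p : poly3) : ps := fun a b c => p`_a`_b`_c.

Definition poly_of_ps3 N (F : ps) : poly3 :=
  \poly_(a < N) \poly_(b < N) \poly_(c < N) F a b c.

Definition ps3_eq_on N (F G : ps) :=
  forall a b c, (a < N)%N -> (b < N)%N -> (c < N)%N -> F a b c = G a b c.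

Lemma ps3_of_polyM (p q : poly3) :
  ps3_mul (ps3_of_poly p) (ps3_of_poly q) = ps3_of_poly (p * q).
Proof.
apply: ps3_ext => a b c; rewrite /ps3_of_poly coefM coef_sum coef_sum.
apply: eq_bigr => i _; rewrite coefM coef_sum; apply: eq_bigr => j _.
by rewrite coefM.
Qed.

Lemma poly_of_ps3K N F : ps3_eq_on N F (ps3_of_poly (poly_of_ps3 N F)).
Proof.
by move=> a b c ha hb hc; rewrite /ps3_of_poly coef_poly ha coef_poly hb coef_poly hc.
Qed.

Lemma ps3_mul_eq_on N (F F' G G' : ps) :
  ps3_eq_on N F F' -> ps3_eq_on N G G' ->
  ps3_eq_on N (ps3_mul F G) (ps3_mul F' G').
Proof.
move=> FF' GG' a b c ha hb hc.
apply: eq_bigr => i _; apply: eq_bigr => j _; apply: eq_bigr => l _.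
have := ltn_ord i; have := ltn_ord j; have := ltn_ord l => *.
by rewrite FF' ?GG' //; lia.
Qed.

Lemma ps3_mul_poly N (F G : ps) :
  ps3_eq_on N (ps3_mul F G)
    (ps3_of_poly (poly_of_ps3 N F * poly_of_ps3 N G)).
Proof. by rewrite -ps3_of_polyM; apply: ps3_mul_eq_on; apply: poly_of_ps3K. Qed.

Lemma ps3_mulA : associative (@ps3_mul K).
Proof.
move=> F G H; apply: ps3_ext => a b c; pose N := (a + b + c).+1.
have [ha hb hc] : [/\ a < N, b < N & c < N]%N by split; lia.
rewrite (ps3_mul_eq_on (poly_of_ps3K (N:=N) F) (ps3_mul_poly (N:=N) G H)) //.
rewrite (ps3_mul_eq_on (ps3_mul_poly (N:=N) F G) (poly_of_ps3K (N:=N) H)) //.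
by rewrite !ps3_of_polyM mulrA.
Qed.

Lemma ps3_mulC : commutative (@ps3_mul K).
Proof.
move=> F G; apply: ps3_ext => a b c; pose N := (a + b + c).+1.
have [ha hb hc] : [/\ a < N, b < N & c < N]%N by split; lia.
by rewrite !(ps3_mul_poly (N:=N)) // mulrC.
Qed.

Lemma ps3_mono_mulE r a0 b0 c0 (F : ps) a b c :
  ps3_mul (ps3_mono r a0 b0 c0) F a b c =
  if [&& a0 <= a, b0 <= b & c0 <= c]%N
  then r * F (a - a0)%N (b - b0)%N (c - c0)%N else 0.
Proof.
rewrite /ps3_mul /ps3_mono.
transitivity (\sum_(i < a.+1) if i == a0 :> nat then
  \sum_(j < b.+1) (if j == b0 :> nat then
    \sum_(l < c.+1) (if l == c0 :> nat then r * F (a - i)%N (b - j)%N (c - l)%N else 0)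
   else 0) else 0).
  apply: eq_bigr => i _; case: eqP => _ /=; last first.
    by rewrite big1 // => j _; rewrite big1 // => l _; rewrite mul0r.
  apply: eq_bigr => j _; case: eqP => _ /=; last by rewrite big1 // => l _; rewrite mul0r.
  by apply: eq_bigr => l _; case: eqP; rewrite ?mul0r.
set g := fun i j l => r * F (a - i)%N (b - j)%N (c - l)%N.
rewrite (sum_ord_eq_if _ _ (fun i => \sum_(j < b.+1) (if j == b0 :> nat then
  \sum_(l < c.+1) (if l == c0 :> nat then g i j l else 0) else 0))) ltnS.
case: leqP => //= _.
rewrite (sum_ord_eq_if _ _ (fun j => \sum_(l < c.+1)
  (if l == c0 :> nat then g a0 j l else 0))) ltnS.
by case: leqP => //= _; rewrite (sum_ord_eq_if _ _ (g a0 b0)) ltnS.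
Qed.

Definition ps3_one : ps := ps3_mono 1 0 0 0.

Lemma ps3_mul1 : left_id ps3_one (@ps3_mul K).
Proof. by move=> F; apply: ps3_ext => a b c; rewrite ps3_mono_mulE !subn0 mul1r. Qed.

Lemma ps3_mulDl : left_distributive (@ps3_mul K) (@ps3_add K).
Proof.
move=> F G H; apply: ps3_ext => a b c; rewrite /ps3_mul /ps3_add -!big_split.
apply: eq_bigr => i _; rewrite -big_split; apply: eq_bigr => j _.
by rewrite -big_split; apply: eq_bigr => l _; rewrite mulrDl.
Qed.

Lemma ps3_one_neq0 : ps3_one != 0.
Proof.
by apply/eqP => /(congr1 (fun F : ps => F 0 0 0)%N) /eqP; rewrite /= oner_eq0.
Qed.

HB.instance Definition _ := GRing.Zmodule_isComNzRing.Build ps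
  ps3_mulA ps3_mulC ps3_mul1 ps3_mulDl ps3_one_neq0.

End PowerSeriesRing.

Section Monomials.
Variable K : fieldType.
Local Notation ps := (ps3 K).

Lemma ps3_addE (F G : ps) a b c : (F + G) a b c = F a b c + G a b c.
Proof. by []. Qed.
Lemma ps3_oppE (F : ps) a b c : (- F) a b c = - F a b c.
Proof. by []. Qed.
Lemma ps3_mulE (F G : ps) a b c : (F * G) a b c = ps3_mul F G a b c.
Proof. by []. Qed.
Lemma ps3_sumE I (r : seq I) (P : pred I) (F : I -> ps) a b c :
  (\sum_(i <- r | P i) F i) a b c = \sum_(i <- r | P i) F i a b c.
Proof. by elim/big_rec2: _ => // i G y _ <-. Qed.

Lemma sum_ps3E (s : seq ps) : sum_ps3 s = \sum_(F <- s) F.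
Proof. by elim: s => [|F s IH]; rewrite ?big_nil // big_cons -IH. Qed.

Definition ps3C (r : K) : ps := ps3_mono r 0 0 0.
Definition ps3X : ps := ps3_mono 1 1 0 0.
Definition ps3Y : ps := ps3_mono 1 0 1 0.
Definition ps3Z : ps := ps3_mono 1 0 0 1.

Lemma ps3_monoM (r s : K) a b c a' b' c' :
  ps3_mono r a b c * ps3_mono s a' b' c' =
  ps3_mono (r * s) (a + a') (b + b') (c + c').
Proof.
apply: ps3_ext => A B D; rewrite ps3_mulE ps3_mono_mulE /ps3_mono.
case: (leqP a A) => ha; case: (leqP b B) => hb; case: (leqP c D) => hc /=;
  do ?[by case: eqP => // E; lia | by do 2?case: eqP => //; case: eqP => // E; lia].
have sub_eq x y z : (x <= y)%N -> (y - x == z)%N = (y == x + z)%N.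
  by move=> hxy; apply/eqP/eqP; lia.
rewrite !sub_eq //; do 3!case: eqP => //; by rewrite mulr0.
Qed.

Lemma ps3_monoN (r : K) a b c : ps3_mono (- r) a b c = - ps3_mono r a b c.
Proof.
by apply: ps3_ext => A B D; rewrite ps3_oppE /ps3_mono; case: ifP; rewrite ?oppr0.
Qed.

Lemma ps3CM (r s : K) : ps3C (r * s) = ps3C r * ps3C s.
Proof. by rewrite /ps3C ps3_monoM. Qed.

Lemma ps3C1 : ps3C 1 = 1 :> ps.
Proof. by []. Qed.

Lemma ps3_oneE a b c :
  (1 : ps) a b c = if [&& a == 0, b == 0 & c == 0]%N then 1 else 0.
Proof. by []. Qed.

Lemma ps3_monoE (r : K) a b c :
  ps3_mono r a b c = ps3C r * ps3X ^+ a * ps3Y ^+ b * ps3Z ^+ c.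
Proof.
have expE n a' b' c' : ps3_mono (1 : K) a' b' c' ^+ n = ps3_mono 1 (a' * n) (b' * n) (c' * n).
  elim: n => [|n IH]; first by rewrite !muln0.
  by rewrite exprS IH ps3_monoM mul1r !mulnS.
by rewrite !expE !mul1n !mul0n /ps3C !ps3_monoM !mulr1 !addn0 !add0n.
Qed.

Lemma ps3_mulXE (F : ps) a b c :
  (ps3X * F) a b c = if (0 < a)%N then F a.-1 b c else 0.
Proof. by rewrite ps3_mulE ps3_mono_mulE !subn0 mul1r andbT subn1. Qed.

End Monomials.

Arguments ps3X {K}.
Arguments ps3Y {K}.
Arguments ps3Z {K}.

Section Rho.
Variable K : fieldType.
Local Notation ps := (ps3 K).

Definition tmono a b c : {poly K} := ('X^6 + 'X^31) ^+ a * 'X^(8 * b + 10 * c).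

Lemma rhoE (F : ps) n : rho F n =
  \sum_(a < n.+1) \sum_(b < n.+1) \sum_(c < n.+1) F a b c * (tmono a b c)`_n.
Proof. by []. Qed.

Lemma tmonoE a b c : tmono a b c = 'X^(6 * a + 8 * b + 10 * c) * (1 + 'X^25) ^+ a.
Proof.
rewrite /tmono (_ : 'X^6 + 'X^31 = 'X^6 * (1 + 'X^25)); last by rewrite mulrDr mulr1 -exprD.
by rewrite exprMn -exprM -addnA !exprD [LHS]mulrAC.
Qed.

Lemma coef_tmono_small a b c n : (n < 6 * a + 8 * b + 10 * c)%N -> (tmono a b c)`_n = 0.
Proof. by move=> h; rewrite tmonoE coefXnM h. Qed.

Lemma coef_tmono_val a b c : (tmono a b c)`_(6 * a + 8 * b + 10 * c) = 1.
Proof.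
rewrite tmonoE coefXnM ltnn subnn.
elim: a => [|a IH]; first by rewrite coefC.
by rewrite exprS mulrDl mul1r coefD IH coefXnM /= addr0.
Qed.

Lemma tmonoM a b c a' b' c' :
  tmono a b c * tmono a' b' c' = tmono (a + a') (b + b') (c + c').
Proof.
rewrite /tmono mulrACA -exprD -exprD; congr (_ * 'X^_); lia.
Qed.

Lemma rho_eq_on n (F G : ps) : ps3_eq_on n.+1 F G -> rho F n = rho G n.
Proof.
by move=> FG; do 3!apply: eq_bigr => ? _; rewrite FG.
Qed.

Lemma rhoD (F G : ps) n : rho (F + G) n = rho F n + rho G n.
Proof.
rewrite !rhoE -big_split; apply: eq_bigr => a _; rewrite -big_split.
by apply: eq_bigr => b _; rewrite -big_split; apply: eq_bigr => c _; rewrite mulrDl.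
Qed.

Lemma rho0 n : rho (0 : ps) n = 0.
Proof.
by rewrite rhoE big1 // => a _; rewrite big1 // => b _; rewrite big1 // => c _; rewrite mul0r.
Qed.

Lemma rhoN (F : ps) n : rho (- F) n = - rho F n.
Proof. by apply/eqP; rewrite -subr_eq0 opprK -rhoD addNr rho0. Qed.

Lemma rho_sum I (r : seq I) (P : pred I) (F : I -> ps) n :
  rho (\sum_(i <- r | P i) F i) n = \sum_(i <- r | P i) rho (F i) n.
Proof. by elim/big_rec2: _ => [|i y G _ <-]; rewrite ?rho0 ?rhoD. Qed.

Lemma rho_mono (r : K) a b c n : rho (ps3_mono r a b c) n = r * (tmono a b c)`_n.
Proof.
rewrite rhoE.
under eq_bigr => i _ do under eq_bigr => j _ do under eq_bigr => l _ do
  rewrite /ps3_mono (fun_if (fun s => s * _)) mul0r.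
rewrite (sum_ord3_pick _ (fun i j l => r * (tmono i j l)`_n)) !ltnS.
case: ifPn => // abc; rewrite coef_tmono_small ?mulr0 //.
by move: abc; rewrite !negb_and -!ltnNge; case/or3P; lia.
Qed.

Definition conv (u v : nat -> K) n := \sum_(k < n.+1) u k * v (n - k)%N.

Definition ps3_trunc n (F : ps) : ps :=
  \sum_(a < n) \sum_(b < n) \sum_(c < n) ps3_mono (F a b c) a b c.

Lemma ps3_trunc_eq_on n (F : ps) : ps3_eq_on n F (ps3_trunc n F).
Proof.
move=> i j l hi hj hl; rewrite /ps3_trunc !ps3_sumE.
under eq_bigr => a _ do rewrite ps3_sumE.
under eq_bigr => a _ do under eq_bigr => b _ do rewrite ps3_sumE.
rewrite -[LHS](_ : \sum_(a < n) \sum_(b < n) \sum_(c < n) (if [&& a == i :> nat,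
    b == j :> nat & c == l :> nat] then F i j l else 0) = _); last first.
  by rewrite (sum_ord3_pick _ (fun _ _ _ => F i j l)) hi hj hl.
do 3!apply: eq_bigr => ? _.
by rewrite /ps3_mono !(eq_sym (nat_of_ord _)); case: and3P => // [[/eqP-> /eqP-> /eqP->]].
Qed.

(* Multiplicativity holds for monomials since [tmono] is, and is bilinear;
   [ps3_trunc] reduces the general case to finite sums of monomials. *)
Let rho_mul_rule n (F G : ps) := rho (F * G) n = conv (rho F) (rho G) n.

Let rho_mul_rule_mono n (r s : K) a b c a' b' c' :
  rho_mul_rule n (ps3_mono r a b c) (ps3_mono s a' b' c').
Proof.
rewrite /rho_mul_rule ps3_monoM rho_mono /conv -tmonoM coefM mulr_sumr.
by apply: eq_bigr => k _; rewrite !rho_mono mulrACA.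
Qed.

Let rho_mul_ruleDl n F1 F2 G :
  rho_mul_rule n F1 G -> rho_mul_rule n F2 G -> rho_mul_rule n (F1 + F2) G.
Proof.
rewrite /rho_mul_rule mulrDl rhoD => -> ->; rewrite /conv -big_split.
by apply: eq_bigr => k _; rewrite rhoD mulrDl.
Qed.

Let rho_mul_ruleDr n F G1 G2 :
  rho_mul_rule n F G1 -> rho_mul_rule n F G2 -> rho_mul_rule n F (G1 + G2).
Proof.
rewrite /rho_mul_rule mulrDr rhoD => -> ->; rewrite /conv -big_split.
by apply: eq_bigr => k _; rewrite rhoD mulrDr.
Qed.

Let rho_mul_rule0l n G : rho_mul_rule n 0 G.
Proof. by rewrite /rho_mul_rule mul0r rho0 /conv big1 // => k _; rewrite rho0 mul0r. Qed.

Let rho_mul_rule0r n F : rho_mul_rule n F 0.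
Proof. by rewrite /rho_mul_rule mulr0 rho0 /conv big1 // => k _; rewrite rho0 mulr0. Qed.

Let rho_mul_rule_trunc n N F G : rho_mul_rule n (ps3_trunc N F) (ps3_trunc N G).
Proof.
rewrite /ps3_trunc.
elim/big_ind: _ => [|F1 F2|a _]; [exact: rho_mul_rule0l|exact: rho_mul_ruleDl|].
elim/big_ind: _ => [|F1 F2|b _]; [exact: rho_mul_rule0l|exact: rho_mul_ruleDl|].
elim/big_ind: _ => [|F1 F2|c _]; [exact: rho_mul_rule0l|exact: rho_mul_ruleDl|].
elim/big_ind: _ => [|G1 G2|a' _]; [exact: rho_mul_rule0r|exact: rho_mul_ruleDr|].
elim/big_ind: _ => [|G1 G2|b' _]; [exact: rho_mul_rule0r|exact: rho_mul_ruleDr|].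
elim/big_ind: _ => [|G1 G2|c' _]; [exact: rho_mul_rule0r|exact: rho_mul_ruleDr|].
exact: rho_mul_rule_mono.
Qed.

Lemma rhoM (F G : ps) n : rho (F * G) n = conv (rho F) (rho G) n.
Proof.
have eq_on_le m (F' G' : ps) : (m <= n.+1)%N -> ps3_eq_on n.+1 F' G' -> ps3_eq_on m F' G'.
  by move=> hm FG a b c ha hb hc; apply: FG; lia.
have truncF := ps3_trunc_eq_on (n:=n.+1) F.
have truncG := ps3_trunc_eq_on (n:=n.+1) G.
rewrite (rho_eq_on (ps3_mul_eq_on truncF truncG)) rho_mul_rule_trunc.
apply: eq_bigr => k _; have hk : (k.+1 <= n.+1)%N := ltn_ord k.
have hk' : ((n - k).+1 <= n.+1)%N by rewrite ltnS leq_subr.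
by rewrite (rho_eq_on (eq_on_le _ _ _ hk truncF)) (rho_eq_on (eq_on_le _ _ _ hk' truncG)).
Qed.

End Rho.

Arguments f1 : simpl never.
Arguments f2 : simpl never.
Arguments f3 : simpl never.
Arguments f4 : simpl never.

Section Kernel.
Variable K : fieldType.
Local Notation ps := (ps3 K).

Lemma rho_fgens i n : rho (fgens K i) n = 0.
Proof.
case: i => [[|[|[|[|//]]]] ?];
  rewrite /fgens /= /f1 /f2 /f3 /f4 sum_ps3E rho_sum !big_cons big_nil !rho_mono;
  rewrite -!coefZ addr0 -!coefD;
  rewrite [X in polyseq X](_ : _ = 0) ?coef0 // -!mul_polyC /tmono; ring.
Qed.

Lemma ps3_idealP n (g : 'I_n -> ps) F :
  ps3_ideal g F <-> exists h : 'I_n -> ps, F = \sum_(i < n) h i * g i.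
Proof.
have sumE h : (fun a b c => \sum_(i < n) ps3_mul (h i) (g i) a b c) = \sum_(i < n) h i * g i.
  by apply: ps3_ext => a b c; rewrite ps3_sumE.
by split=> -[h ->]; exists h; rewrite sumE.
Qed.

Lemma ps3_ideal_gen n (g : 'I_n -> ps) k : ps3_ideal g (g k).
Proof.
apply/ps3_idealP; exists (fun j => (j == k)%:R); rewrite (bigD1 k) //= eqxx mul1r.
by rewrite big1 ?addr0 // => j /negbTE->; rewrite mul0r.
Qed.

Lemma rho_fgens_comb (h : 'I_4 -> ps) n : rho (\sum_(j < 4) h j * fgens K j) n = 0.
Proof.
rewrite rho_sum big1 // => i _.
by rewrite rhoM /conv big1 // => k _; rewrite rho_fgens mulr0.
Qed.

Lemma ideal_fgens_P (F : ps) : ps3_ideal (@fgens K) F -> P_Moh F.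
Proof. by case/ps3_idealP => h -> n; apply: rho_fgens_comb. Qed.

End Kernel.

Section XadicDivision.
Variable K : fieldType.
Local Notation ps := (ps3 K).

Definition ps3_at_x0 (F : ps) : ps :=
  fun a b c => if a == 0%N then F 0%N b c else 0.

Lemma ps3_at_x0_is_zmod_morphism : zmod_morphism ps3_at_x0.
Proof.
by move=> F G; apply: ps3_ext => -[|a] b c //; rewrite ps3_addE ps3_oppE /= subr0.
Qed.

Lemma ps3_at_x0_is_monoid_morphism : monoid_morphism ps3_at_x0.
Proof.
split; first by apply: ps3_ext => -[|a] b c.
move=> F G; apply: ps3_ext => -[|a] b c; rewrite /ps3_at_x0 /= !ps3_mulE /ps3_mul.
  by rewrite !big_ord_recl !big_ord0 !addr0.
apply/esym; do 3!apply: big1 => ? _.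
by case: eqP => [->|]; rewrite ?mul0r //= mulr0.
Qed.

HB.instance Definition _ :=
  GRing.isZmodMorphism.Build ps ps ps3_at_x0 ps3_at_x0_is_zmod_morphism.
HB.instance Definition _ :=
  GRing.isMonoidMorphism.Build ps ps ps3_at_x0 ps3_at_x0_is_monoid_morphism.

Lemma ps3_at_x0M (F G : ps) : ps3_at_x0 (F * G) = ps3_at_x0 F * ps3_at_x0 G.
Proof. exact: rmorphM. Qed.

Lemma ps3_at_x0_id (F : ps) :
  (forall a b c, (0 < a)%N -> F a b c = 0) -> ps3_at_x0 F = F.
Proof. by move=> Fx; apply: ps3_ext => -[|a] b c //=; rewrite Fx. Qed.

Lemma ps3_at_x0_mono (r : K) a b c :
  ps3_at_x0 (ps3_mono r a b c) = if a == 0%N then ps3_mono r a b c else 0.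
Proof.
case: eqP => [->|/eqP a0]; first by apply: ps3_at_x0_id => -[|A] B D //.
apply: ps3_ext => A B D; rewrite /ps3_at_x0 /ps3_mono.
by case: (A =P 0%N) => // _; rewrite eq_sym (negbTE a0).
Qed.

Lemma ps3_at_x0X : ps3_at_x0 ps3X = 0 :> ps.
Proof. exact: ps3_at_x0_mono. Qed.
Lemma ps3_at_x0Y : ps3_at_x0 ps3Y = ps3Y :> ps.
Proof. exact: ps3_at_x0_mono. Qed.
Lemma ps3_at_x0Z : ps3_at_x0 ps3Z = ps3Z :> ps.
Proof. exact: ps3_at_x0_mono. Qed.
Lemma ps3_at_x0C (r : K) : ps3_at_x0 (ps3C r) = ps3C r.
Proof. exact: ps3_at_x0_mono. Qed.

Definition ps3_divx (F : ps) : ps := fun a b c => F a.+1 b c.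

Lemma ps3_divxK (F : ps) : ps3_at_x0 F = 0 -> ps3X * ps3_divx F = F.
Proof.
move=> F0; apply: ps3_ext => -[|a] b c; rewrite ps3_mulXE //=.
by have /= := congr1 (fun G : ps => G 0%N b c) F0; rewrite /ps3_at_x0 eqxx.
Qed.

Definition xseries (r : nat -> K) : ps :=
  fun a b c => if (b == 0%N) && (c == 0%N) then r a else 0.

Lemma xseriesS (r : nat -> K) :
  xseries r = ps3C (r 0%N) + ps3X * xseries (fun a => r a.+1).
Proof.
apply: ps3_ext => -[|a] b c; rewrite ps3_addE ps3_mulXE /=; first by rewrite addr0.
by rewrite /ps3C /ps3_mono /= add0r.
Qed.

(* If every series is congruent modulo x to a combination of the [b i] with
   constant coefficients plus an x-free combination of the [f j], iterating on
   the quotients by x yields a combination with coefficients in K[[x]] for the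
   [b i] and in K[[x,y,z]] for the [f j]. *)
Section Division.
Variables (n m : nat) (f : 'I_n -> ps) (b : 'I_m -> ps).
Variables (quot : ps -> 'I_n -> ps) (rem : ps -> 'I_m -> K).
Hypothesis quot_xfree : forall G j, ps3_at_x0 (quot G j) = quot G j.
Hypothesis division_mod_x : forall G,
  ps3_at_x0 (G - \sum_(i < m) ps3C (rem G i) * b i - \sum_(j < n) quot G j * f j) = 0.
Variable F : ps.

Let next (G : ps) : ps :=
  ps3_divx (G - \sum_(i < m) ps3C (rem G i) * b i - \sum_(j < n) quot G j * f j).
Let Gs k := iter k next F.
Let hs k j : ps := fun a b c => quot (Gs (k + a)) j 0%N b c.
Let rs k i a := rem (Gs (k + a)) i.
Let err k := Gs k - \sum_(j < n) hs k j * f j - \sum_(i < m) xseries (rs k i) * b i.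

Let hsS k j : hs k j = quot (Gs k) j + ps3X * hs k.+1 j.
Proof.
apply: ps3_ext => -[|a] A B; rewrite ps3_addE ps3_mulXE /hs /= ?addn0 ?addr0 //.
by rewrite -[quot (Gs k) j]quot_xfree /ps3_at_x0 /= add0r addnS.
Qed.

Let errS k : err k = ps3X * err k.+1.
Proof.
have hsum : \sum_(j < n) hs k j * f j =
    \sum_(j < n) quot (Gs k) j * f j + ps3X * \sum_(j < n) hs k.+1 j * f j.
  by rewrite mulr_sumr -big_split; apply: eq_bigr => j _; rewrite hsS mulrDl mulrA.
have rsum : \sum_(i < m) xseries (rs k i) * b i =
    \sum_(i < m) ps3C (rem (Gs k) i) * b i
    + ps3X * \sum_(i < m) xseries (rs k.+1 i) * b i.
  rewrite mulr_sumr -big_split; apply: eq_bigr => i _.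
  by rewrite xseriesS /rs addn0 mulrDl mulrA; under eq_fun do rewrite addnS.
have GsS : Gs k = \sum_(i < m) ps3C (rem (Gs k) i) * b i
    + \sum_(j < n) quot (Gs k) j * f j + ps3X * Gs k.+1.
  by rewrite [Gs k.+1]/Gs iterS -/(Gs k) ps3_divxK ?division_mod_x //; ring.
rewrite /err hsum rsum {1}GsS; ring.
Qed.

Lemma xadic_division : exists (h : 'I_n -> ps) (r : 'I_m -> nat -> K),
  F = \sum_(j < n) h j * f j + \sum_(i < m) xseries (r i) * b i.
Proof.
have err0 : err 0 = 0.
  apply: ps3_ext => a; elim: a 0%N => [|a IH] k B C; rewrite errS ps3_mulXE //=.
exists (hs 0), (rs 0); apply/eqP; rewrite -subr_eq0 opprD addrA; exact/eqP.
Qed.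

End Division.

End XadicDivision.

Section MohDivision.
Variable K : fieldType.
Local Notation ps := (ps3 K).

Definition moh_basis (i : 'I_6) : ps :=
  match val i with
  | 0 => 1 | 1 => ps3Y | 2 => ps3Z | 3 => ps3Y ^+ 2 - ps3X * ps3Z
  | 4 => ps3Y * ps3Z - ps3X ^+ 3 | _ => ps3Z ^+ 2 - ps3X ^+ 2 * ps3Y
  end.

Local Ltac fgens_at_x0 :=
  rewrite sum_ps3E rmorph_sum !big_cons big_nil /= !ps3_at_x0_mono /= !addr0
    ?add0r !ps3_monoN !ps3_monoE ?ps3C1; ring.

Lemma f1_at_x0 : ps3_at_x0 (f1 K) = ps3C 3 * ps3Y ^+ 3 * (1 - ps3Z ^+ 5).
Proof. by rewrite /f1; fgens_at_x0. Qed.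
Lemma f2_at_x0 : ps3_at_x0 (f2 K) = ps3C 2 * ps3Y ^+ 2 * ps3Z * (1 - ps3Y ^+ 5 * ps3Z).
Proof. by rewrite /f2; fgens_at_x0. Qed.
Lemma f3_at_x0 : ps3_at_x0 (f3 K) = ps3Y * ps3Z ^+ 2 * (1 - ps3Y ^+ 5 * ps3Z).
Proof. by rewrite /f3; fgens_at_x0. Qed.
Lemma f4_at_x0 : ps3_at_x0 (f4 K) = ps3Z ^+ 3 * (1 - ps3Y ^+ 5 * ps3Z).
Proof. by rewrite /f4; fgens_at_x0. Qed.

Definition geom_z5 : ps :=
  fun a b c => if [&& a == 0, b == 0 & c %% 5 == 0]%N then 1 else 0.
Definition geom_y5z : ps :=
  fun a b c => if (a == 0%N) && (b == 5 * c)%N then 1 else 0.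

Lemma geom_z5K : geom_z5 * (1 - ps3Z ^+ 5) = 1.
Proof.
apply: ps3_ext => a b c.
rewrite mulrBr mulr1 mulrC ps3_addE ps3_oppE ps3_mulE.
rewrite (_ : ps3Z ^+ 5 = ps3_mono 1 0 0 5); last by rewrite ps3_monoE ps3C1 !expr0 !mul1r.
rewrite ps3_mono_mulE ps3_oneE /geom_z5 !subn0 /= mul1r.
case: (leqP 5 c) => hc; last first.
  by rewrite modn_small // subr0.
have -> : ((c - 5) %% 5 = c %% 5)%N by rewrite -{2}(subnK hc) modnDr.
have -> : (c == 0%N) = false by apply/eqP; lia.
by rewrite !andbF; case: (_ && _); rewrite subrr.
Qed.

Lemma geom_y5zK : geom_y5z * (1 - ps3Y ^+ 5 * ps3Z) = 1.
Proof.
apply: ps3_ext => a b c.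
rewrite mulrBr mulr1 mulrC ps3_addE ps3_oppE ps3_mulE.
rewrite (_ : ps3Y ^+ 5 * ps3Z = ps3_mono 1 0 5 1); last first.
  by rewrite ps3_monoE ps3C1 expr0 expr1 !mul1r.
rewrite ps3_mono_mulE ps3_oneE /geom_y5z !subn0 /= mul1r.
case: (leqP 5 b) => hb; case: (leqP 1 c) => hc /=.
- have -> : (b - 5 == 5 * (c - 1))%N = (b == 5 * c)%N by apply/eqP/eqP; lia.
  have -> : (b == 0%N) = false by apply/eqP; lia.
  by rewrite !andbF subrr.
- have -> : (b == 5 * c)%N = false by apply/eqP; lia.
  by rewrite andbF [X in [&& _, X & _]](_ : _ = false) ?andbF ?subr0 //; apply/eqP; lia.
- have -> : (b == 5 * c)%N = false by apply/eqP; lia.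
  by rewrite andbF [X in [&& _, _ & X]](_ : _ = false) ?andbF ?subr0 //; apply/eqP; lia.
- have -> : (c == 0%N) by lia.
  have -> : (b == 5 * c)%N = (b == 0%N) by apply/eqP/eqP; lia.
  by rewrite andbT subr0.
Qed.

Definition ps3_ytail (G : ps) : ps :=
  fun a b c => if a == 0%N then G 0%N (b + 3)%N c else 0.
Definition ps3_zslice k d (G : ps) : ps :=
  fun a b c => if (a == 0%N) && (b == 0%N) then G 0%N k (c + d)%N else 0.

Lemma ps3_at_x0_decomp (G : ps) : ps3_at_x0 G =
  ps3_mono (G 0 0 0)%N 0 0 0 + ps3_mono (G 0 1 0)%N 0 1 0 + ps3_mono (G 0 0 1)%N 0 0 1
  + ps3_mono (G 0 2 0)%N 0 2 0 + ps3_mono (G 0 1 1)%N 0 1 1 + ps3_mono (G 0 0 2)%N 0 0 2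
  + ps3_mono 1 0 3 0 * ps3_ytail G + ps3_mono 1 0 2 1 * ps3_zslice 2 1 G
  + ps3_mono 1 0 1 2 * ps3_zslice 1 2 G + ps3_mono 1 0 0 3 * ps3_zslice 0 3 G.
Proof.
apply: ps3_ext => a b c; rewrite !ps3_addE !ps3_mulE !ps3_mono_mulE.
rewrite /ps3_at_x0 /ps3_ytail /ps3_zslice /ps3_mono !subn0 /=.
case: a => [|a] /=; last by rewrite !mulr0 !if_same !addr0.
case: b => [|[|[|b]]]; case: c => [|[|[|c]]] /=;
  rewrite ?subSS ?subn0 ?addn1 ?addn2 ?addn3 /= ?mulr0 ?mul1r ?addr0 ?add0r //.
Qed.

Definition moh_rem (G : ps) (i : 'I_6) : K :=
  match val i with
  | 0 => G 0 0 0 | 1 => G 0 1 0 | 2 => G 0 0 1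
  | 3 => G 0 2 0 | 4 => G 0 1 1 | _ => G 0 0 2
  end%N.

Definition moh_quot (G : ps) (j : 'I_4) : ps :=
  match val j with
  | 0 => ps3_ytail G * geom_z5 * ps3C 3^-1
  | 1 => ps3_zslice 2 1 G * geom_y5z * ps3C 2^-1
  | 2 => ps3_zslice 1 2 G * geom_y5z
  | _ => ps3_zslice 0 3 G * geom_y5z
  end.

Arguments moh_basis : simpl never.
Arguments moh_quot : simpl never.

Lemma moh_quot_xfree G j : ps3_at_x0 (moh_quot G j) = moh_quot G j.
Proof.
have ytail : ps3_at_x0 (ps3_ytail G) = ps3_ytail G by apply: ps3_at_x0_id => -[].
have zslice k d : ps3_at_x0 (ps3_zslice k d G) = ps3_zslice k d G.
  by apply: ps3_at_x0_id => -[].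
have gz : ps3_at_x0 geom_z5 = geom_z5 by apply: ps3_at_x0_id => -[].
have gyz : ps3_at_x0 geom_y5z = geom_y5z by apply: ps3_at_x0_id => -[].
by case: j => -[|[|[|[|//]]]] ? /=; rewrite !rmorphM /= ?ytail ?zslice ?gz ?gyz ?ps3_at_x0C.
Qed.

Lemma moh_basis_at_x0 i : ps3_at_x0 (moh_basis i) =
  match val i with
  | 0 => 1 | 1 => ps3Y | 2 => ps3Z | 3 => ps3Y ^+ 2 | 4 => ps3Y * ps3Z | _ => ps3Z ^+ 2
  end.
Proof.
by case: i => -[|[|[|[|[|[|//]]]]]] ?; rewrite /moh_basis ?rmorph1 ?rmorphB ?rmorphM /=;
  rewrite ?ps3_at_x0X ?ps3_at_x0Y ?ps3_at_x0Z ?mul0r ?subr0.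
Qed.

Lemma moh_division_mod_x G : (2 : K) != 0 -> (3 : K) != 0 ->
  ps3_at_x0 (G - \sum_(i < 6) ps3C (moh_rem G i) * moh_basis i
               - \sum_(j < 4) moh_quot G j * fgens K j) = 0.
Proof.
move=> two_neq0 three_neq0.
rewrite !rmorphB !rmorph_sum /=.
under eq_bigr do rewrite ps3_at_x0M ps3_at_x0C moh_basis_at_x0.
under [X in _ - X]eq_bigr do rewrite ps3_at_x0M moh_quot_xfree.
rewrite !big_ord_recl !big_ord0 /= /moh_quot /moh_rem /fgens /=.
rewrite f1_at_x0 f2_at_x0 f3_at_x0 f4_at_x0.
have unit_geom (H M : ps) : H * geom_y5z * (M * (1 - ps3Y ^+ 5 * ps3Z)) = M * H.
  transitivity (M * H * (geom_y5z * (1 - ps3Y ^+ 5 * ps3Z))); first by ring.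
  by rewrite geom_y5zK mulr1.
have cancelC (r : K) : r != 0 -> ps3C r^-1 * ps3C r = 1.
  by move=> r0; rewrite -ps3CM mulVf.
have e1 : ps3_ytail G * geom_z5 * ps3C 3^-1 * (ps3C 3 * ps3Y ^+ 3 * (1 - ps3Z ^+ 5))
    = ps3Y ^+ 3 * ps3_ytail G.
  transitivity (ps3Y ^+ 3 * ps3_ytail G * (geom_z5 * (1 - ps3Z ^+ 5)) * (ps3C 3^-1 * ps3C 3)).
    by ring.
  by rewrite geom_z5K cancelC // !mulr1.
have e2 : ps3_zslice 2 1 G * geom_y5z * ps3C 2^-1
    * (ps3C 2 * ps3Y ^+ 2 * ps3Z * (1 - ps3Y ^+ 5 * ps3Z))
    = ps3Y ^+ 2 * ps3Z * ps3_zslice 2 1 G.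
  transitivity (ps3_zslice 2 1 G * geom_y5z * (ps3Y ^+ 2 * ps3Z * (1 - ps3Y ^+ 5 * ps3Z))
    * (ps3C 2^-1 * ps3C 2)); first by ring.
  by rewrite unit_geom cancelC // mulr1.
rewrite e1 e2 !unit_geom ps3_at_x0_decomp !ps3_monoE ps3C1; ring.
Qed.

Lemma moh_division (F : ps) : (2 : K) != 0 -> (3 : K) != 0 ->
  exists (h : 'I_4 -> ps) (r : 'I_6 -> nat -> K),
    F = \sum_(j < 4) h j * fgens K j + \sum_(i < 6) xseries (r i) * moh_basis i.
Proof.
move=> two_neq0 three_neq0.
exact: xadic_division moh_quot_xfree (fun G => moh_division_mod_x G two_neq0 three_neq0) F.
Qed.

End MohDivision.

Arguments moh_basis {K}.

Section Independence.
Variable K : fieldType.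
Local Notation ps := (ps3 K).

Lemma rho_xseries (r : nat -> K) k :
  rho (xseries r) k = \sum_(a < k.+1) r a * (tmono K a 0 0)`_k.
Proof.
rewrite rhoE; apply: eq_bigr => a _.
rewrite big_ord_recl [X in _ + X]big1 ?addr0 => [|b _]; last first.
  by rewrite big1 // => c _; rewrite mul0r.
by rewrite big_ord_recl [X in _ + X]big1 ?addr0 // => c _; rewrite mul0r.
Qed.

(* Only the term of exponent 6a = k survives: lower ones are killed by r, higher
   ones by the t-adic order 6a of rho(x^a). *)
Lemma rho_xseries_low (r : nat -> K) M k :
  (forall a, (6 * a < M)%N -> r a = 0) -> (k <= M)%N ->
  rho (xseries r) k = if (k == M) && (6 %| M)%N then r (M %/ 6)%N else 0.
Proof.
move=> r0 kM; rewrite rho_xseries.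
rewrite (eq_bigr (fun a : 'I_k.+1 =>
    if a == (k %/ 6)%N :> nat then (if (6 %| k)%N then r a else 0) else 0)); last first.
  move=> a _; case: (ltngtP (6 * a) k) => h.
  - by rewrite r0 ?mul0r ?if_same //; lia.
  - rewrite coef_tmono_small ?mulr0; last lia.
    by rewrite (_ : (a == (k %/ 6)%N :> nat) = false) //; apply/eqP; lia.
  - have := coef_tmono_val K a 0 0; rewrite !muln0 !addn0 h => ->.
    have [-> ->] : (a == (k %/ 6)%N :> nat) /\ (6 %| k)%N by split; lia.
    by rewrite mulr1.
rewrite (sum_ord_eq_if _ _ (fun a => if (6 %| k)%N then r a else 0)) ltnS leq_div.
case: eqP => [-> //|kM']; case: ifP => // dvd6.
by apply: r0; lia.
Qed.

Lemma rho_xseries_mulE (r : nat -> K) (B : ps) e k :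
  (forall j, (j < e)%N -> rho B j = 0) -> (forall a, (6 * a + e < k)%N -> r a = 0) ->
  rho (xseries r * B) k =
  if (e <= k)%N && (6 %| k - e)%N then r ((k - e) %/ 6)%N * rho B e else 0.
Proof.
move=> B0 r0; rewrite rhoM /conv.
have rlow a : (6 * a < k - e)%N -> r a = 0 by move=> ?; apply: r0; lia.
case: (leqP e k) => ek /=; last first.
  by rewrite big1 // => m _; rewrite B0 ?mulr0 //; have := ltn_ord m; lia.
have kek : (k - e < k.+1)%N by lia.
rewrite (bigD1 (Ordinal kek)) //= big1 ?addr0; last first.
  move=> m /eqP mne; case: (ltnP (k - e) m) => h.
    by rewrite B0 ?mulr0 //; have := ltn_ord m; lia.
  rewrite (rho_xseries_low rlow h) (_ : (m == (k - e)%N :> nat) = false) ?mul0r //.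
  by apply/eqP => E; apply: mne; apply: val_inj.
by rewrite (rho_xseries_low rlow) // eqxx /= subKn //; case: ifP; rewrite ?mul0r.
Qed.

(* rho(x^a B_i) has t-adic order 6a + e_i, and these orders are pairwise distinct. *)
Lemma xseries_combination_eq0 m (B : 'I_m -> ps) (e : 'I_m -> nat)
    (r : 'I_m -> nat -> K) :
  (forall i j, (j < e i)%N -> rho (B i) j = 0) -> (forall i, rho (B i) (e i) != 0) ->
  injective (fun i => e i %% 6)%N ->
  (forall k, \sum_(i < m) rho (xseries (r i) * B i) k = 0) ->
  forall i a, r i a = 0.
Proof.
move=> B0 Be einj sum0.
suff r0 k i a : (6 * a + e i < k)%N -> r i a = 0.
  by move=> i a; apply: (r0 (6 * a + e i).+1).
elim: k i a => [//|k IH] i a; rewrite ltnS leq_eqVlt => /orP[/eqP ka|]; last exact: IH.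
have := sum0 k; rewrite (bigD1 i) //= big1 ?addr0; last first.
  move=> j ji; rewrite (rho_xseries_mulE (B0 j) (IH j)).
  case: ifP => // /andP[ejk dvd].
  by case/eqP: ji; apply: einj => /=; lia.
rewrite (rho_xseries_mulE (B0 i) (IH i)) -ka leq_addl /= addnK mulKn // dvdn_mulr //.
by move/eqP; rewrite mulf_eq0 (negbTE (Be i)) orbF => /eqP.
Qed.

End Independence.

Section MohKernel.
Variable K : fieldType.
Local Notation ps := (ps3 K).

Definition rho_is (F : ps) (p : {poly K}) := forall n, rho F n = p`_n.

Lemma rho_isB F G p q : rho_is F p -> rho_is G q -> rho_is (F - G) (p - q).
Proof. by move=> Fp Gq n; rewrite rhoD rhoN Fp Gq coefB. Qed.

Lemma rho_isM F G p q : rho_is F p -> rho_is G q -> rho_is (F * G) (p * q).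
Proof. by move=> Fp Gq n; rewrite rhoM coefM; apply: eq_bigr => k _; rewrite Fp Gq. Qed.

Lemma rho_is_mono (r : K) a b c : rho_is (ps3_mono r a b c) (r *: tmono K a b c).
Proof. by move=> n; rewrite rho_mono coefZ. Qed.

Lemma rho_isXn F p k : rho_is F p -> rho_is (F ^+ k) (p ^+ k).
Proof.
move=> Fp; elim: k => [|k IH]; last by rewrite !exprS; apply: rho_isM.
by have := rho_is_mono 1 0 0 0; rewrite scale1r /tmono !muln0 expr0 mulr1.
Qed.

Lemma rho_isX : rho_is ps3X ('X^6 + 'X^31).
Proof. by have := rho_is_mono 1 1 0 0; rewrite scale1r /tmono !muln0 expr1 mulr1. Qed.
Lemma rho_isY : rho_is ps3Y 'X^8.
Proof. by have := rho_is_mono 1 0 1 0; rewrite scale1r /tmono expr0 mul1r. Qed.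
Lemma rho_isZ : rho_is ps3Z 'X^10.
Proof. by have := rho_is_mono 1 0 0 1; rewrite scale1r /tmono expr0 mul1r. Qed.

Definition moh_basis_ord (i : 'I_6) : nat :=
  match val i with 0 => 0 | 1 => 8 | 2 => 10 | 3 => 41 | 4 => 43 | _ => 45 end.

Definition moh_basis_unit (i : 'I_6) : {poly K} :=
  match val i with
  | 0 | 1 | 2 => 1 | 3 => -1 | 4 => -3%:P - 3%:P * 'X^25 - 'X^50 | _ => -2%:P - 'X^25
  end.

Lemma rho_moh_basis i :
  rho_is (moh_basis i) ('X^(moh_basis_ord i) * moh_basis_unit i).
Proof.
have rX := rho_isX; have rY := rho_isY; have rZ := rho_isZ.
case: i => -[|[|[|[|[|[|//]]]]]] ?;
  rewrite /moh_basis /moh_basis_ord /moh_basis_unit /= ?mulr1.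
- by have := rho_isXn 0 rX; rewrite !expr0.
- by [].
- by [].
- rewrite (_ : 'X^41 * -1 = 'X^8 ^+ 2 - ('X^6 + 'X^31) * 'X^10); last by ring.
  by apply: rho_isB; [apply: rho_isXn | apply: rho_isM].
- rewrite (_ : 'X^43 * _ = 'X^8 * 'X^10 - ('X^6 + 'X^31) ^+ 3); last by ring.
  by apply: rho_isB; [apply: rho_isM | apply: rho_isXn].
- rewrite (_ : 'X^45 * _ = 'X^10 ^+ 2 - ('X^6 + 'X^31) ^+ 2 * 'X^8); last by ring.
  by apply: rho_isB; [apply: rho_isXn | apply: rho_isM; first apply: rho_isXn].
Qed.

End MohKernel.

Arguments moh_basis_unit {K}.

Section Order.
Variable K : fieldType.
Local Notation ps := (ps3 K).

Definition ps3_ord_ge d (G : ps) := forall a b c, (a + b + c < d)%N -> G a b c = 0.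

Lemma ps3_ord_ge0 d : ps3_ord_ge d 0.
Proof. by []. Qed.

Lemma ps3_ord_geD d (E G : ps) : ps3_ord_ge d E -> ps3_ord_ge d G -> ps3_ord_ge d (E + G).
Proof. by move=> Ed Gd a b c h; rewrite ps3_addE Ed // Gd // addr0. Qed.

Lemma ps3_ord_ge_sum d n (G : 'I_n -> ps) :
  (forall i, ps3_ord_ge d (G i)) -> ps3_ord_ge d (\sum_(i < n) G i).
Proof.
move=> Gd; apply: big_ind => [|E1 E2|i _]; first exact: ps3_ord_ge0.
  exact: ps3_ord_geD.
exact: Gd.
Qed.

Lemma ps3_ord_geM d (E G : ps) : ps3_ord_ge d G -> ps3_ord_ge d (E * G).
Proof.
move=> Gd a b c h; rewrite ps3_mulE /ps3_mul big1 // => i _.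
rewrite big1 // => j _; rewrite big1 // => l _; rewrite Gd ?mulr0 //.
by have := ltn_ord i; have := ltn_ord j; have := ltn_ord l; lia.
Qed.

Lemma ps3_ord_ge_mulE d (E G : ps) a b c : ps3_ord_ge d G -> (a + b + c = d)%N ->
  (E * G) a b c = E 0%N 0%N 0%N * G a b c.
Proof.
move=> Gd abc; rewrite ps3_mulE /ps3_mul.
have Gi i j l : (0 < i + j + l)%N -> (i <= a)%N -> (j <= b)%N -> (l <= c)%N ->
    G (a - i)%N (b - j)%N (c - l)%N = 0.
  by move=> *; rewrite Gd //; lia.
rewrite big_ord_recl [X in _ + X]big1 ?addr0 => [|i _]; last first.
  rewrite big1 // => j _; rewrite big1 // => l _; rewrite Gi ?mulr0 //;
  by have := ltn_ord i; have := ltn_ord j; have := ltn_ord l; rewrite ?lift0; lia.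
rewrite big_ord_recl [X in _ + X]big1 ?addr0 => [|j _]; last first.
  rewrite big1 // => l _; rewrite Gi ?mulr0 //;
  by have := ltn_ord j; have := ltn_ord l; rewrite ?lift0; lia.
rewrite big_ord_recl [X in _ + X]big1 ?addr0 => [|l _]; last first.
  by rewrite Gi ?mulr0 //; have := ltn_ord l; rewrite ?lift0; lia.
by rewrite !subn0.
Qed.

Lemma ps3_ord_ge_mono d (r : K) a b c :
  (d <= a + b + c)%N -> ps3_ord_ge d (ps3_mono r a b c).
Proof.
move=> dabc A B C h; rewrite /ps3_mono.
by case: and3P => // -[/eqP EA /eqP EB /eqP EC]; lia.
Qed.

End Order.

Section MohIdeal.
Variable K : fieldType.
Hypotheses (two_neq0 : (2 : K) != 0) (three_neq0 : (3 : K) != 0).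
Local Notation ps := (ps3 K).

Lemma P_Moh_fgens (F : ps) : P_Moh F -> ps3_ideal (@fgens K) F.
Proof.
move=> PF; have [h [r Fhr]] := moh_division F two_neq0 three_neq0.
have r0 : forall i a, r i a = 0.
  apply: (@xseries_combination_eq0 _ _ moh_basis moh_basis_ord) => [i j hj|i||k].
  - by rewrite rho_moh_basis coefXnM hj.
  - rewrite rho_moh_basis coefXnM ltnn subnn.
    case: i => -[|[|[|[|[|[|//]]]]]] ? /=; rewrite /moh_basis_unit /= ?coef1 ?oner_eq0 //.
    + by rewrite coefN coef1 oppr_eq0 oner_eq0.
    + by rewrite !coefB coefN coefC coefMXn coefXn /= !subr0 oppr_eq0.
    + by rewrite !coefB coefN coefC coefXn /= subr0 oppr_eq0.
  - move=> i j; case: i => -[|[|[|[|[|[|//]]]]]] ?;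
    by case: j => -[|[|[|[|[|[|//]]]]]] ? //= _; apply: val_inj.
  - by have := PF k; rewrite Fhr rhoD rho_fgens_comb add0r rho_sum.
apply/ps3_idealP; exists h; rewrite Fhr [X in _ + X]big1 ?addr0 // => i _.
rewrite (_ : xseries (r i) = 0) ?mul0r //.
by apply: ps3_ext => a b c; rewrite /xseries r0 if_same.
Qed.

Lemma fgens_ord_ge i : ps3_ord_ge 3 (fgens K i).
Proof.
case: i => -[|[|[|[|//]]]] ?; rewrite /fgens /= /f1 /f2 /f3 /f4 sum_ps3E;
  rewrite !big_cons big_nil;
  by do !apply: ps3_ord_geD => //; apply: ps3_ord_ge_mono.
Qed.

Definition fgens_cubic (e : 'I_4) : K := match val e with 0 => 3 | 1 => 2 | _ => 1 end.

Lemma fgens_cubicE (i e : 'I_4) :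
  fgens K i 0 (3 - e)%N e = if i == e then fgens_cubic e else 0.
Proof.
case: i => -[|[|[|[|//]]]] ?; case: e => -[|[|[|[|//]]]] ?;
  rewrite /fgens /fgens_cubic /= /f1 /f2 /f3 /f4 sum_ps3E ps3_sumE !big_cons big_nil;
  by rewrite /ps3_mono /= ?addr0 ?add0r.
Qed.

Lemma P_Moh_generators_card n (g : 'I_n -> ps) :
  (forall F, P_Moh F <-> ps3_ideal g F) -> (4 <= n)%N.
Proof.
move=> Pg.
have g_ord k : ps3_ord_ge 3 (g k).
  have /P_Moh_fgens /ps3_idealP [h ->] := proj2 (Pg (g k)) (ps3_ideal_gen g k).
  by apply: ps3_ord_ge_sum => j; apply: ps3_ord_geM; apply: fgens_ord_ge.
have /choice [h fh] : forall i, exists hi : 'I_n -> ps, fgens K i = \sum_(k < n) hi k * g k.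
  by move=> i; apply/ps3_idealP/Pg/ideal_fgens_P/ps3_ideal_gen.
pose Mf := \matrix_(i < 4, e < 4) fgens K i 0%N (3 - e)%N e.
pose Mg := \matrix_(k < n, e < 4) g k 0%N (3 - e)%N e.
pose H := \matrix_(i < 4, k < n) h i k 0%N 0%N 0%N.
have MfE : Mf = H *m Mg.
  apply/matrixP => i e; rewrite !mxE fh ps3_sumE; apply: eq_bigr => k _.
  by rewrite !mxE (ps3_ord_ge_mulE _ (g_ord k)) //; have := ltn_ord e; lia.
have Mf_unit : Mf \in unitmx.
  rewrite (_ : Mf = diag_mx (\row_e fgens_cubic e)); last first.
    by apply/matrixP => i e; rewrite !mxE fgens_cubicE; case: eqP => [->|]; rewrite ?mulr1n.
  rewrite unitmxE det_diag unitfE; apply/prodf_neq0 => e _; rewrite mxE.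
  by case: e => -[|[|[|[|//]]]] ?; rewrite /fgens_cubic /= ?oner_eq0.
by rewrite -(mxrank_unit Mf_unit) MfE (leq_trans (mxrankM_maxl _ _)) ?rank_leq_col.
Qed.

End MohIdeal.

Lemma natr_prime_neq0 (K : fieldType) (q : nat) :
  ((forall p : nat, p \notin [pchar K]) \/
   (exists p : nat, p \in [pchar K] /\ (5 <= p)%N)) ->
  prime q -> (q < 5)%N -> (q%:R : K) != 0.
Proof.
move=> hchar q_pr q_lt5; apply/negP => /eqP q0.
have q_char : q \in [pchar K] by apply/andP; split => //; apply/eqP.
case: hchar => [/(_ q)|[p [p_char p_ge5]]]; first by rewrite q_char.
by have := pcharf_eq p_char q; rewrite q_char => /esym /eqP qp; lia.
Qed.

Theorem mainTheorem5 (K : fieldType)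
  (hchar : (forall p : nat, p \notin [pchar K]) \/
           (exists p : nat, p \in [pchar K] /\ (5 <= p)%N)) :
  (forall F : ps3 K, P_Moh F <-> ps3_ideal (@fgens K) F) /\
  (forall (n : nat) (g : 'I_n -> ps3 K),
     (forall F : ps3 K, P_Moh F <-> ps3_ideal g F) -> (4 <= n)%N).
Proof.
have two_neq0 : (2 : K) != 0 by apply: natr_prime_neq0.
have three_neq0 : (3 : K) != 0 by apply: natr_prime_neq0.
split=> [F|n g]; first by split; [apply: P_Moh_fgens | apply: ideal_fgens_P].
exact: P_Moh_generators_card.
Qed.
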